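(* Let $\mathcal{G}$ be an undirected weighted graph (nonzero real weights, possibly negative) with $c$ connected components, let $\mathcal{F}$ be a spanning forest with cycle subgraph $\mathcal{C}$, and suppose $L(\mathcal{G})$ has $n_+$ positive, $n_-$ negative and $n_0$ zero eigenvalues (counted with multiplicity). Then the essential edge Laplacian $L_{ess}(\mathcal{F})=L_e(\mathcal{F})R_{(\mathcal{F},\mathcal{C})}WR_{(\mathcal{F},\mathcal{C})}^T$ has only real eigenvalues, of which $n_+$ are positive, $n_-$ are negative and $n_0-c$ are zero (counted with multiplicity).
   Context: A weighted graph $\mathcal{G}=(\mathcal{V},\mathcal{E},\mathcal{W})$ has weight function $\mathcal{W}:\mathcal{E}\to\mathbb{R}\setminus\{0\}$; $W$ is the diagonal matrix of edge weights. With an arbitrary orientation of edges, the incidence matrix $E\in\mathbb{R}^{|\mathcal{V}|\times|\mathcal{E}|}$ has in the column of edge $(i,j)$ entry $+1$ in row $i$, $-1$ in row $j$, $0$ elsewhere; $L(\mathcal{G})=EWE^T$. A spanning forest $\mathcal{F}$ is an acyclic subgraph with $|\mathcal{V}|-c$ edges containing a spanning tree of each component; the cycle subgraph $\mathcal{C}$ consists of the remaining edges. Edges are ordered so $E=[E_{\mathcal{F}}\ E_{\mathcal{C}}]$ and $W$ correspondingly. $L_e(\mathcal{F})=E_{\mathcal{F}}^TE_{\mathcal{F}}$ (invertible), and $R_{(\mathcal{F},\mathcal{C})}=[\,I\ \ L_e(\mathcal{F})^{-1}E_{\mathcal{F}}^TE_{\mathcal{C}}\,]$. *)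

From HB Require Import structures.
From mathcomp Require Import all_boot all_order all_algebra.
Set Implicit Arguments. Unset Strict Implicit. Unset Printing Implicit Defensive.
Import Order.TTheory GRing.Theory Num.Theory.
Local Open Scope ring_scope.

(* A graph on vertices 'I_n with m edges; edge e joins [src e] and [dst e];
   the orientation (src e -> dst e) is the arbitrary orientation. *)

Definition simple_graph (n m : nat) (src dst : 'I_m -> 'I_n) : Prop :=
  (forall e, src e != dst e) /\
  (forall e e', ((src e == src e') && (dst e == dst e'))
                || ((src e == dst e') && (dst e == src e')) -> e = e').

Definition sub_adj (n m : nat) (src dst : 'I_m -> 'I_n) (P : pred 'I_m)
  : rel 'I_n :=
  fun x y => [exists e : 'I_m, P e &&
     (((src e == x) && (dst e == y)) || ((src e == y) && (dst e == x)))].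

Definition n_components (n m : nat) (src dst : 'I_m -> 'I_n) : nat :=
  n_comp (connect (sub_adj src dst predT)) predT.

Definition incidence (R : pzRingType) (n m : nat) (src dst : 'I_m -> 'I_n)
  : 'M[R]_(n, m) :=
  \matrix_(i < n, e < m)
    ((if i == src e then 1 else 0) - (if i == dst e then 1 else 0)).

Definition weightmx (R : pzRingType) (m : nat) (w : 'I_m -> R) : 'M[R]_m :=
  diag_mx (\row_e w e).

Definition laplacian (R : pzRingType) (n m : nat) (src dst : 'I_m -> 'I_n)
  (w : 'I_m -> R) : 'M[R]_n :=
  incidence R src dst *m weightmx w *m (incidence R src dst)^T.

(* Edges are ordered as [forest edges (k of them); cycle edges (l of them)]. *)
Definition forest_edge (k l : nat) : pred 'I_(k + l) := fun e => (e < k)%N.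

(* The first k edges form a spanning forest: acyclic (removing any forest
   edge disconnects its endpoints within the forest), and they connect
   exactly the same vertex pairs as the whole graph (i.e. contain a
   spanning tree of each component); and k = |V| - c. *)
Definition spanning_forest (n k l : nat) (src dst : 'I_(k + l) -> 'I_n)
  : Prop :=
  [/\ (k = n - n_components src dst)%N,
      (forall e : 'I_(k + l), @forest_edge k l e ->
         ~~ connect (sub_adj src dst
                       (fun e' => @forest_edge k l e' && (e' != e)))
                    (src e) (dst e)) &
      (forall x y, connect (sub_adj src dst (@forest_edge k l)) x y =
                   connect (sub_adj src dst predT) x y)].

Definition edge_lap_forest (R : comUnitRingType) (n k l : nat)
  (src dst : 'I_(k + l) -> 'I_n) : 'M[R]_k :=
  (lsubmx (incidence R src dst))^T *m lsubmx (incidence R src dst).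

Definition Rmat (R : comUnitRingType) (n k l : nat)
  (src dst : 'I_(k + l) -> 'I_n) : 'M[R]_(k, k + l) :=
  row_mx 1%:M (invmx (edge_lap_forest R src dst)
               *m (lsubmx (incidence R src dst))^T
               *m rsubmx (incidence R src dst)).

Definition ess_edge_lap (R : comUnitRingType) (n k l : nat)
  (src dst : 'I_(k + l) -> 'I_n) (w : 'I_(k + l) -> R) : 'M[R]_k :=
  edge_lap_forest R src dst *m Rmat R src dst *m weightmx w
    *m (Rmat R src dst)^T.

(* s lists the eigenvalues of A with algebraic multiplicity, all real
   (i.e. the characteristic polynomial splits over R with roots s). *)
Definition real_spectrum (R : comNzRingType) (d : nat) (A : 'M[R]_d)
  (s : seq R) : Prop :=
  char_poly A = \prod_(x <- s) ('X - x%:P).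

(** The forest incidence matrix [E_F] has independent columns (every forest
    edge has a cut separating its endpoints), and every column of [E] is a
    combination of them (the forest connects the same vertices as the graph);
    hence [L_e(F)] is invertible and [E = E_F R], so that
    [L(G) = E_F (M E_F^T)] and [L_ess(F) = (E_F^T E_F) M] with
    [M = R W R^T].  The identity [X^k det(X - AB) = X^n det(X - BA)] for
    [A] of size [n x k] and [B] of size [k x n] then gives
    [char L(G) = X^c char L_ess(F)] because [n = k + c], so [L_ess(F)] has
    the spectrum of [L(G)] with [c] zeros removed. *)
From HB Require Import structures.
From mathcomp Require Import all_boot all_order all_algebra.
Import Order.TTheory GRing.Theory Num.Theory.
Local Open Scope ring_scope.

Lemma char_poly_mulmxC (R : comNzRingType) m n
    (A : 'M[R]_(m, n)) (B : 'M[R]_(n, m)) :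
  'X^n * char_poly (A *m B) = 'X^m * char_poly (B *m A).
Proof.
set A' := map_mx polyC A; set B' := map_mx polyC B.
(* Two block eliminations of [[X, A'], [B', 1]] compute its determinant. *)
pose Z := block_mx ('X%:M : 'M_m) A' B' (1%:M : 'M_n).
have elimA : block_mx 1%:M (- A') 0 1%:M *m Z
             = block_mx (char_poly_mx (A *m B)) 0 B' 1%:M.
  rewrite mulmx_block /char_poly_mx map_mxM -/A' -/B'.
  by rewrite !mul1mx !mulmx1 !mul0mx !add0r mulNmx addrN.
have elimB : block_mx 1%:M 0 (- B') ('X%:M) *m Z
             = block_mx ('X%:M) A' 0 (char_poly_mx (B *m A)).
  rewrite mulmx_block /char_poly_mx map_mxM -/A' -/B'.
  rewrite !mul1mx !mulmx1 !mul0mx !addr0 mulNmx.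
  rewrite mul_mx_scalar mul_scalar_mx addNr.
  by congr block_mx; rewrite addrC mulNmx.
have := congr1 determinant elimA.
rewrite det_mulmx det_ublock det_lblock !det1 !mul1r mulr1 => detA.
have := congr1 determinant elimB.
rewrite det_mulmx det_ublock det_lblock det1 mul1r !det_scalar => detB.
by rewrite /char_poly -detA -detB mulrC.
Qed.

Lemma lreg_polyXn {R : nzRingType} (m : nat) : GRing.lreg ('X^m : {poly R}).
Proof. by apply: lreg_lead; rewrite lead_coefXn; apply: lreg1. Qed.

Lemma char_poly_mulmx_sqC (R : comNzRingType) n (A B : 'M[R]_n) :
  char_poly (A *m B) = char_poly (B *m A).
Proof. by apply: (lreg_polyXn n); rewrite char_poly_mulmxC. Qed.

Lemma prod_XsubC_zero_roots (R : idomainType) (s : seq R) :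
  \prod_(x <- s) ('X - x%:P)
  = \prod_(x <- s | x != 0) ('X - x%:P) * 'X^(count (fun x => x == 0) s).
Proof.
rewrite (bigID (fun x => x != 0)) /=; congr (_ * _).
rewrite (eq_bigr (fun _ => 'X)); last by move=> x /negPn/eqP ->; rewrite subr0.
rewrite big_const_seq iter_mulr_1; congr (_ ^+ _); apply: eq_count => x /=.
by rewrite negbK.
Qed.

Lemma prod_XsubC_divXn (R : realDomainType) (c : nat) (p : {poly R})
    (s : seq R) :
  'X^c * p = \prod_(x <- s) ('X - x%:P) ->
  exists s' : seq R,
    [/\ p = \prod_(x <- s') ('X - x%:P),
        count (fun x => 0 < x) s' = count (fun x => 0 < x) s,
        count (fun x => x < 0) s' = count (fun x => x < 0) s &
        count (fun x => x == 0) s' = (count (fun x : R => x == 0%R) s - c)%N].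
Proof.
rewrite prod_XsubC_zero_roots.
set z := count _ s; set P := \prod_(x <- s | _) _ => hp.
have P0 : P.[0] != 0.
  rewrite /P horner_prod prodf_seq_neq0; apply/allP => x _; apply/implyP => hx.
  by rewrite !hornerE oppr_eq0.
have le_cz : (c <= z)%N.
  rewrite leqNgt; apply/negP => lt_zc.
  have : 'X^z * ('X^(c - z) * p) = 'X^z * P.
    by rewrite mulrA -exprD subnKC ?(ltnW lt_zc) // hp mulrC.
  move/lreg_polyXn/(congr1 (horner^~ 0)).
  rewrite hornerM hornerXn expr0n subn_eq0 leqNgt lt_zc mul0r => P0'.
  by move: P0; rewrite -P0' eqxx.
have count_nz (a : pred R) : ~~ a 0 ->
    count a ([seq x <- s | x != 0] ++ nseq (z - c) 0) = count a s.
  move=> a0; rewrite count_cat count_filter count_nseq (negbTE a0) mul0n addn0.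
  apply: eq_count => x /=.
  by case: eqVneq => [->|]; rewrite ?(negbTE a0) ?andbT.
exists ([seq x <- s | x != 0] ++ nseq (z - c) 0); split.
- apply: (lreg_polyXn c); rewrite hp big_cat /= big_filter big_nseq subr0.
  by rewrite iter_mulr_1 mulrCA -exprD subnKC.
- by rewrite count_nz ?ltxx.
- by rewrite count_nz ?ltxx.
- rewrite count_cat count_filter count_nseq eqxx mul1n.
  by rewrite (eq_count (a2 := pred0)) ?count_pred0 // => x /=; case: eqP.
Qed.

Lemma gram_unitmx (R : realFieldType) m n (A : 'M[R]_(m, n)) :
  row_free A -> A *m A^T \in unitmx.
Proof.
move=> freeA; rewrite -row_free_unit; apply: inj_row_free => v vAA0.
apply/(row_free_inj freeA); rewrite mul0mx; set u := v *m A.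
have /rowP uu0 : u *m u^T = 0.
  by rewrite trmx_mul mulmxA -(mulmxA v) vAA0 mul0mx.
have sum_sq_u0 : \sum_i u 0 i * u 0 i = 0.
  move: (uu0 0); rewrite !mxE => sum0; rewrite -[in RHS]sum0.
  by apply: eq_bigr => i _; rewrite [u^T _ _]mxE.
have sq_u0 i : u 0 i * u 0 i = 0.
  by apply: (psumr_eq0P _ sum_sq_u0) => // j _; rewrite -expr2 sqr_ge0.
apply/rowP => i; rewrite [RHS]mxE.
by move/eqP: (sq_u0 i); rewrite mulf_eq0 orbb => /eqP.
Qed.

Lemma n_components_le {n m : nat} (src dst : 'I_m -> 'I_n) :
  (n_components src dst <= n)%N.
Proof. by apply: leq_trans (max_card _) _; rewrite card_ord. Qed.

Lemma tr_incidence_mulmxE (R : comNzRingType) n m (src dst : 'I_m -> 'I_n) p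
    (Y : 'M[R]_(n, p)) e j :
  ((incidence R src dst)^T *m Y) e j = Y (src e) j - Y (dst e) j.
Proof.
rewrite mxE; under eq_bigr => i _ do rewrite !mxE mulrBl.
rewrite sumrB (bigD1 (src e)) //= eqxx mul1r big1 ?addr0; last first.
  by move=> i /negPf ->; rewrite mul0r.
rewrite (bigD1 (dst e)) //= eqxx mul1r big1 ?addr0 //.
by move=> i /negPf ->; rewrite mul0r.
Qed.

Section SpanningForest.

Variables (n k l : nat) (src dst : 'I_(k + l) -> 'I_n).
Hypothesis forestF : spanning_forest src dst.

Lemma forest_incidence_mulmxE (R : comNzRingType) p (Y : 'M[R]_(n, p)) f j :
  ((lsubmx (incidence R src dst))^T *m Y) f j
  = Y (src (lshift l f)) j - Y (dst (lshift l f)) j.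
Proof. by rewrite -tr_incidence_mulmxE trmx_lsub mul_usub_mx mxE. Qed.

Lemma forest_edge_lshift (f : 'I_k) : forest_edge (lshift l f).
Proof. by rewrite /forest_edge /= ltn_ord. Qed.

Lemma size_spanning_forest : n = (k + n_components src dst)%N.
Proof.
case: forestF => size_k _ _.
by rewrite -[LHS](subnK (n_components_le src dst)) -size_k.
Qed.

(* A vertex potential constant along forest edges is constant on each
   component of the graph. *)
Lemma forest_kernel_incidence (R : comNzRingType) p (Y : 'M[R]_(n, p)) :
  (lsubmx (incidence R src dst))^T *m Y = 0 -> (incidence R src dst)^T *m Y = 0.
Proof.
case: forestF => _ _ spanF /matrixP FY0; apply/matrixP => e j.
rewrite tr_incidence_mulmxE mxE.
have Yadj x y : sub_adj src dst (@forest_edge k l) x y -> Y x j = Y y j.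
  case/existsP => f /andP[lt_fk xy]; move: (FY0 (Ordinal lt_fk) j).
  rewrite forest_incidence_mulmxE mxE.
  have -> : lshift l (Ordinal lt_fk) = f by apply: val_inj.
  by move/subr0_eq; case/orP: xy => /andP[/eqP -> /eqP ->].
pose a := [pred v | Y v j == Y (src e) j].
have closed_a : closed (sub_adj src dst (@forest_edge k l)) a.
  by move=> x y /Yadj xy; rewrite !inE xy.
have conn_e : connect (sub_adj src dst (@forest_edge k l)) (src e) (dst e).
  by rewrite spanF; apply: connect1; apply/existsP; exists e; rewrite !eqxx.
have := closed_connect closed_a conn_e; rewrite !inE eqxx => /esym/eqP ->.
by rewrite subrr.
Qed.

Lemma incidence_forest_factor (R : fieldType) :
  exists D, incidence R src dst = lsubmx (incidence R src dst) *m D.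
Proof.
have /submxP[D defE] : ((incidence R src dst)^T
                         <= (lsubmx (incidence R src dst))^T)%MS.
  by rewrite submxE; apply/eqP/forest_kernel_incidence/mulmx_coker.
by exists D^T; rewrite -[LHS]trmxK defE trmx_mul trmxK.
Qed.

(* The indicator of the side of [src f] in the cut of the forest edge [f]. *)
Lemma forest_cut_indicator (R : comNzRingType) (f : 'I_k) :
  exists Y : 'cV[R]_n, (lsubmx (incidence R src dst))^T *m Y = delta_mx f 0.
Proof.
case: forestF => _ acyclicF _.
pose ef := lshift l f.
pose adj := sub_adj src dst (fun e => @forest_edge k l e && (e != ef)).
exists (\col_i (if connect adj (src ef) i then 1 else 0)).
apply/matrixP => g j; rewrite forest_incidence_mulmxE !mxE (ord1 j) eqxx andbT.
have [->|ne_gf] := eqVneq g f.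
  by rewrite connect0 (negbTE (acyclicF _ (forest_edge_lshift f))) subr0.
have ne_eg : lshift l g != ef by apply: contra ne_gf => /eqP/lshift_inj ->.
have adj_g : adj (src (lshift l g)) (dst (lshift l g)).
  by apply/existsP; exists (lshift l g); rewrite forest_edge_lshift ne_eg !eqxx.
have adj_g' : adj (dst (lshift l g)) (src (lshift l g)).
  apply/existsP; exists (lshift l g).
  by rewrite forest_edge_lshift ne_eg !eqxx orbT.
suff -> : connect adj (src ef) (src (lshift l g))
          = connect adj (src ef) (dst (lshift l g)) by rewrite subrr.
by apply/idP/idP => /connect_trans; apply; apply: connect1.
Qed.

Lemma row_free_forest_incidence (R : fieldType) :
  row_free (lsubmx (incidence R src dst))^T.
Proof.
apply: inj_row_free => v vEF0; apply/rowP => f.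
have [Y cutY] := forest_cut_indicator R f.
have := congr1 (fun M : 'M[R]_(1, 1) => M 0 0) (congr1 (mulmx^~ Y) vEF0).
by rewrite /= -mulmxA cutY mul0mx -colE !mxE.
Qed.

Lemma edge_lap_forest_unit (R : realFieldType) :
  edge_lap_forest R src dst \in unitmx.
Proof.
by rewrite /edge_lap_forest -{2}[lsubmx _]trmxK gram_unitmx
  ?row_free_forest_incidence.
Qed.

Lemma forest_incidence_mul_Rmat (R : realFieldType) :
  lsubmx (incidence R src dst) *m Rmat R src dst = incidence R src dst.
Proof.
have [D defE] := incidence_forest_factor R.
rewrite /Rmat mul_mx_row mulmx1 -[RHS]hsubmxK; congr row_mx.
set EF := lsubmx _ in defE *; rewrite -[D]hsubmxK mul_mx_row in defE.
rewrite [in RHS]defE row_mxKr [in LHS]defE row_mxKr.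
rewrite -!mulmxA (mulmxA EF^T) -/(edge_lap_forest R src dst).
by rewrite (mulmxA (invmx _)) mulVmx ?mul1mx ?edge_lap_forest_unit.
Qed.

Lemma char_poly_laplacian (R : realFieldType) (w : 'I_(k + l) -> R) :
  char_poly (laplacian src dst w)
  = 'X^(n_components src dst) * char_poly (ess_edge_lap src dst w).
Proof.
set EF := lsubmx (incidence R src dst).
set M := Rmat R src dst *m weightmx w *m (Rmat R src dst)^T.
have -> : laplacian src dst w = EF *m (M *m EF^T).
  by rewrite /laplacian -forest_incidence_mul_Rmat trmx_mul /M !mulmxA.
have -> : ess_edge_lap src dst w = EF^T *m EF *m M.
  by rewrite /ess_edge_lap /M !mulmxA.
apply: (lreg_polyXn k); rewrite char_poly_mulmxC -[M *m _ *m _]mulmxA.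
rewrite char_poly_mulmx_sqC.
by rewrite {1}size_spanning_forest exprD -mulrA mulrCA.
Qed.

End SpanningForest.

Theorem theorem1 (R : rcfType) (n k l : nat)
  (src dst : 'I_(k + l) -> 'I_n) (w : 'I_(k + l) -> R)
  (hsimple : simple_graph src dst)
  (hw : forall e, w e != 0)
  (hF : spanning_forest src dst)
  (s : seq R) (hL : real_spectrum (laplacian src dst w) s) :
  exists s' : seq R,
    [/\ real_spectrum (ess_edge_lap src dst w) s',
        count (fun x => 0 < x) s' = count (fun x => 0 < x) s,
        count (fun x => x < 0) s' = count (fun x => x < 0) s &
        count (fun x => x == 0) s' =
          (count (fun x : R => x == 0%R) s - n_components src dst)%N].
Proof. by apply: prod_XsubC_divXn; rewrite -hL char_poly_laplacian. Qed.
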